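(* Every $GF(2)$-chordal matroid is a chordal matroid.
   Context: All matroids are simple. For matroids $M_1,M_2$ whose ground sets meet in a set $T$ that is a modular flat of $M_1$ with $M_1|T=M_2|T=N$, the generalized parallel connection $P_N(M_1,M_2)$ is the matroid on $E(M_1)\cup E(M_2)$ whose flats are the sets $Z$ with $Z\cap E(M_i)$ a flat of $M_i$ for $i=1,2$ (if $T=\emptyset$ this is $M_1\oplus M_2$). A matroid is $GF(2)$-chordal if it can be built from binary projective geometries by a sequence of generalized parallel connections across binary projective geometries. A matroid $M$ is chordal if, for each circuit $C$ of $M$ with at least four elements, there are circuits $C_1$ and $C_2$ and an element $e$ such that $C_1\cap C_2=\{e\}$ and $C=(C_1\cup C_2)-e$. *)

From HB Require Import structures.
From mathcomp Require Import all_boot all_order all_algebra.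
Set Implicit Arguments. Unset Strict Implicit. Unset Printing Implicit Defensive.
Import GRing.Theory.

Section Matroids.
Variable T : finType.

Record matroid := Matroid {
  ground : {set T};
  indep : {set T} -> bool;
  indep0 : indep set0;
  indep_sub : forall X, indep X -> X \subset ground;
  indep_hered : forall X Y : {set T}, Y \subset X -> indep X -> indep Y;
  indep_aug : forall X Y : {set T}, indep X -> indep Y -> #|X| < #|Y| ->
                exists2 y, y \in Y :\: X & indep (y |: X)
}.

Variable M : matroid.

Definition rk (X : {set T}) : nat :=
  \max_(Y : {set T} | (Y \subset X) && indep M Y) #|Y|.

Definition flat (X : {set T}) : bool :=
  (X \subset ground M) &&
  [forall e in ground M :\: X, rk X < rk (e |: X)].

Definition circuit (C : {set T}) : bool :=
  [&& C \subset ground M, ~~ indep M C & [forall e in C, indep M (C :\ e)]].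

Definition modular_flat (F : {set T}) : Prop :=
  flat F /\ forall X : {set T}, flat X -> rk F + rk X = rk (F :|: X) + rk (F :&: X).

Definition simple_matroid : Prop :=
  forall X : {set T}, X \subset ground M -> #|X| <= 2 -> indep M X.

(* the restriction M|S is isomorphic to the binary projective geometry
   PG(r-1,2) for some r (r = 0 gives the empty matroid): there is a bijection
   from S onto the nonzero vectors of GF(2)^r under which the independent
   subsets of S are exactly those sent to linearly independent vectors. *)
Definition rows_of (r : nat) (f : T -> 'rV['F_2]_r) (X : {set T}) :
  'M['F_2]_(#|X|, r) := \matrix_(i < #|X|) f (enum_val (A := X) i).

Definition binary_pg_on (S : {set T}) : Prop :=
  exists (r : nat) (f : T -> 'rV['F_2]_r),
    [/\ {in S &, injective f},
        f @: S = [set v : 'rV['F_2]_r | v != 0%R] &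
        forall X : {set T}, X \subset S -> indep M X = row_free (rows_of f X)].

Definition binary_pg : Prop := binary_pg_on (ground M).

Definition chordal : Prop :=
  forall C : {set T}, circuit C -> 4 <= #|C| ->
    exists (C1 C2 : {set T}) (e : T), [/\ circuit C1, circuit C2, C1 :&: C2 = [set e] &
                        C = (C1 :|: C2) :\ e].

End Matroids.

(* M is the generalized parallel connection P_N(M1,M2), where
   T = E(M1) ∩ E(M2) is a modular flat of M1, M1|T = M2|T (= N), and the flats
   of M are the subsets Z of E(M1) ∪ E(M2) with Z ∩ E(Mi) a flat of Mi. *)
Definition is_gpc (T : finType) (M1 M2 M : matroid T) : Prop :=
  let S := ground M1 :&: ground M2 in
  [/\ ground M = ground M1 :|: ground M2,
      modular_flat M1 S,
      (forall X : {set T}, X \subset S -> indep M1 X = indep M2 X) &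
      (forall Z : {set T}, flat M Z <->
         [/\ Z \subset ground M, flat M1 (Z :&: ground M1)
           & flat M2 (Z :&: ground M2)])].

Definition is_gpc_pg (T : finType) (M1 M2 M : matroid T) : Prop :=
  is_gpc M1 M2 M /\ binary_pg_on M1 (ground M1 :&: ground M2).

Inductive gf2_chordal (T : finType) : matroid T -> Prop :=
| gf2c_pg M : binary_pg M -> gf2_chordal M
| gf2c_gpc M1 M2 M : gf2_chordal M1 -> gf2_chordal M2 ->
    is_gpc_pg M1 M2 M -> gf2_chordal M.

From mathcomp Require Import all_boot all_order all_algebra.
From mathcomp Require Import zify.
Set Implicit Arguments. Unset Strict Implicit. Unset Printing Implicit Defensive.
Import GRing.Theory.

(* By induction on the construction, a GF(2)-chordal matroid is chordal and
   each of its restrictions that is a binary projective geometry is a modular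
   flat.  The second property makes the connecting geometry N = E1 :&: E2 of
   P_N(M1, M2) modular on both sides, so that closure and rank in P_N(M1, M2)
   are computed side by side through N.
   In PG(r-1, 2) the spans of two complementary proper parts of a circuit C
   meet, because rk C < #|C|; a common point e lies off C, and the circuits
   through e inside the two parts plus e form a chord.  In P_N(M1, M2) a
   circuit inside one side is a circuit of that side.  A circuit C meeting both
   E1 :\: N and E2 :\: N splits as P = C :\: E2 and Q = C :&: E2, and the
   modularity of N shows that the traces cl1 P :&: N and cl2 Q :&: N are
   rank-deficient inside the geometry N; so they share a point e, which again
   yields a chord. *)

Section MatroidRank.
Variables (T : finType) (M : matroid T).
Local Notation rk := (rk M).
Implicit Types X Y Z A B I W : {set T}.

Lemma indep_leq_rk X Y : Y \subset X -> indep M Y -> #|Y| <= rk X.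
Proof.
by move=> sYX iY; apply: (leq_bigmax_cond (F := fun Y : {set T} => #|Y|)); rewrite sYX.
Qed.

Lemma basis_exists X : exists2 Y : {set T}, (Y \subset X) && indep M Y & #|Y| = rk X.
Proof.
have : 0 < #|[pred Y : {set T} | (Y \subset X) && indep M Y]|.
  by apply/card_gt0P; exists set0; rewrite inE sub0set indep0.
by case/(eq_bigmax_cond (fun Y : {set T} => #|Y|)) => Y HY eY; exists Y.
Qed.

Lemma rk_leq_card X : rk X <= #|X|.
Proof. by apply/bigmax_leqP => Y /andP[sYX _]; apply: subset_leq_card. Qed.

Lemma rkS X Y : X \subset Y -> rk X <= rk Y.
Proof.
move=> sXY; apply/bigmax_leqP => Z /andP[sZX iZ].
exact: indep_leq_rk (subset_trans sZX sXY) iZ.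
Qed.

Lemma rk_indep X : indep M X -> rk X = #|X|.
Proof. by move=> iX; apply/eqP; rewrite eqn_leq rk_leq_card indep_leq_rk. Qed.

Lemma indep_rkE X : indep M X = (rk X == #|X|).
Proof.
apply/idP/eqP => [|rkX]; first exact: rk_indep.
case: (basis_exists X) => Y /andP[sYX iY] eY.
suff -> : X = Y by [].
by apply/esym/setP/subset_cardP; rewrite ?eY.
Qed.

Lemma indep_extend I X : I \subset X -> indep M I ->
  exists B, [/\ I \subset B, B \subset X, indep M B & #|B| = rk X].
Proof.
move=> sIX iI.
pose P B := [&& I \subset B, B \subset X & indep M B].
have PI : P I by rewrite /P subxx sIX iI.
case: (@arg_maxnP _ I P (fun B => #|B|) PI) => B /and3P[sIB sBX iB] Bmax.
exists B; split => //; apply/eqP; rewrite eqn_leq indep_leq_rk //= leqNgt.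
apply/negP => ltBX; case: (basis_exists X) => Y /andP[sYX iY] eY.
have [|y /setDP[yY yB] iyB] := indep_aug iB iY; first by rewrite eY.
have : P (y |: B).
  by rewrite /P iyB subUset sub1set (subsetP sYX) // sBX (subset_trans sIB) ?subsetUr.
by move/Bmax; rewrite cardsU1 yB add1n; apply/negP; rewrite -ltnNge.
Qed.

Lemma rk_submod A B : rk (A :|: B) + rk (A :&: B) <= rk A + rk B.
Proof.
have [B0 [_ sB0 iB0 <-]] := indep_extend (sub0set (A :&: B)) (indep0 M).
have sIU : A :&: B \subset A :|: B := subset_trans (subsetIl A B) (subsetUl A B).
have [B1 [s01 s1 i1 <-]] := indep_extend (subset_trans sB0 sIU) iB0.
have rA : #|B1 :&: A| <= rk A := indep_leq_rk (subsetIr _ _) (indep_hered (subsetIl _ _) i1).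
have rB : #|B1 :&: B| <= rk B := indep_leq_rk (subsetIr _ _) (indep_hered (subsetIl _ _) i1).
apply: leq_trans (leq_add rA rB).
rewrite -[#|B1 :&: A| + _]cardsUI -setIUr (setIidPl s1) leq_add2l; apply: subset_leq_card.
by rewrite setIACA setIid subsetI s01 sB0.
Qed.

Lemma rkU A B : rk (A :|: B) <= rk A + rk B.
Proof. exact: leq_trans (leq_addr _ _) (rk_submod A B). Qed.

Lemma basis_setI Z W B B0 : indep M B -> B \subset Z -> B0 \subset B -> B0 \subset W ->
  #|B0| = rk (Z :&: W) -> B :&: W = B0.
Proof.
move=> iB sBZ s0 s0W c0; apply/esym/eqP.
have s : B0 \subset B :&: W by rewrite subsetI s0 s0W.
rewrite -(subset_leqif_cards s) eqn_leq subset_leq_card //= c0.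
exact: indep_leq_rk (setSI _ sBZ) (indep_hered (subsetIl _ _) iB).
Qed.

End MatroidRank.

Section MatroidClosure.
Variables (T : finType) (M : matroid T).
Local Notation E := (ground M).
Local Notation rk := (rk M).
Implicit Types X Y Z A B L S : {set T}.

Definition cl X := [set e in E | rk (e |: X) <= rk X].

Lemma clE e X : (e \in cl X) = (e \in E) && (rk (e |: X) <= rk X).
Proof. by rewrite inE. Qed.

Lemma cl_ground X : cl X \subset E.
Proof. by apply/subsetP => e; rewrite clE => /andP[]. Qed.

Lemma subset_cl X : X \subset E -> X \subset cl X.
Proof.
move=> sX; apply/subsetP => e eX.
by rewrite clE (subsetP sX e eX) (setUidPr (_ : [set e] \subset X)) ?sub1set ?leqnn.
Qed.

Lemma rk_setU1_cl x X Y : x \in cl X -> X \subset Y -> rk (x |: Y) <= rk Y.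
Proof.
rewrite clE => /andP[_ rkx] sXY.
have := rk_submod M (x |: X) Y.
rewrite -setUA (setUidPr sXY).
have : rk X <= rk ((x |: X) :&: Y) by apply: rkS; rewrite subsetI subsetUr sXY.
lia.
Qed.

Lemma clS X Y : X \subset Y -> cl X \subset cl Y.
Proof.
move=> sXY; apply/subsetP => x xX; rewrite clE (rk_setU1_cl xX sXY) andbT.
exact: subsetP (cl_ground X) x xX.
Qed.

Lemma rk_setU_cl X S : S \subset cl X -> rk (X :|: S) = rk X.
Proof.
elim: {S}#|S| {-2}S (erefl #|S|) => [|n IH] S cardS sS.
  by rewrite (cards0_eq cardS) setU0.
have /card_gt0P [x xS] : 0 < #|S| by rewrite cardS.
have rkSx : rk (X :|: S :\ x) = rk X.
  by apply: IH (subset_trans (subD1set _ _) sS); move: cardS; rewrite (cardsD1 x) xS => -[].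
apply/eqP; rewrite eqn_leq [rk X <= _]rkS ?subsetUl // andbT -{1}(setD1K xS) setUCA -rkSx.
exact: rk_setU1_cl (subsetP sS x xS) (subsetUl _ _).
Qed.

Lemma rk_cl X : X \subset E -> rk (cl X) = rk X.
Proof. by move=> sX; rewrite -{1}(setUidPr (subset_cl sX)) rk_setU_cl. Qed.

Lemma flat_sub_ground Z : flat M Z -> Z \subset E.
Proof. by case/andP. Qed.

Lemma cl_sub_flat Z X : flat M Z -> X \subset Z -> cl X \subset Z.
Proof.
case/andP => sZ /forall_inP rkZ sXZ; apply/subsetP => e eX.
apply/negPn/negP => eZ; have := rkZ e; rewrite inE eZ.
by rewrite (subsetP (cl_ground X)) // ltnNge (rk_setU1_cl eX sXZ) => /(_ isT).
Qed.

Lemma flat_of_cl_sub Z : Z \subset E -> cl Z \subset Z -> flat M Z.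
Proof.
move=> sZ clZ; rewrite /flat sZ; apply/forall_inP => e /setDP[eE eZ].
by rewrite ltnNge; apply: contra eZ => rke; apply: (subsetP clZ); rewrite clE eE.
Qed.

Lemma flat_cl X : X \subset E -> flat M (cl X).
Proof.
move=> sX; apply: flat_of_cl_sub (cl_ground X) _; apply/subsetP => e.
rewrite !clE rk_cl // => /andP[-> rke] /=; apply: leq_trans rke.
by apply/rkS/setUS/subset_cl.
Qed.

Lemma cl_flat Z : flat M Z -> cl Z = Z.
Proof.
move=> fZ; apply/eqP; rewrite eqEsubset cl_sub_flat //=.
exact/subset_cl/flat_sub_ground.
Qed.

Lemma flatT : flat M E.
Proof. exact: flat_of_cl_sub (subxx E) (cl_ground E). Qed.

Lemma flatI A B : flat M A -> flat M B -> flat M (A :&: B).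
Proof.
move=> fA fB; apply: flat_of_cl_sub.
  exact: subset_trans (subsetIl _ _) (flat_sub_ground fA).
by rewrite subsetI !cl_sub_flat ?subsetIl ?subsetIr.
Qed.

Lemma flat_rk_subset A B : flat M A -> A \subset B -> B \subset E -> rk B <= rk A ->
  B \subset A.
Proof.
move=> fA sAB sB rkBA; apply/subsetP => b bB; apply: (subsetP (cl_sub_flat fA (subxx A))).
by rewrite clE (subsetP sB) //=; apply: leq_trans rkBA; rewrite rkS // subUset sub1set bB.
Qed.

Lemma cl_clU X L : X :|: L \subset E -> cl (cl X :|: L) = cl (X :|: L).
Proof.
move=> sXL; have sX : X \subset E := subset_trans (subsetUl _ _) sXL.
apply/eqP; rewrite eqEsubset [cl (X :|: L) \subset _]clS ?setSU ?subset_cl // andbT.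
apply: cl_sub_flat; first exact: flat_cl.
by rewrite subUset clS ?subsetUl // (subset_trans (subsetUr X L)) ?subset_cl.
Qed.

Lemma rk_clU X L : X :|: L \subset E -> rk (cl X :|: L) = rk (X :|: L).
Proof.
move=> sXL; have sX : X \subset E := subset_trans (subsetUl _ _) sXL.
apply/eqP; rewrite eqn_leq [rk (X :|: L) <= _]rkS ?setSU ?subset_cl // andbT.
rewrite -(rk_cl sXL) -cl_clU //.
by apply/rkS/subset_cl; rewrite subUset cl_ground (subset_trans (subsetUr X L)).
Qed.

Lemma indep_clE X : X \subset E -> indep M X = [forall x in X, x \notin cl (X :\ x)].
Proof.
move=> sX; apply/idP/forall_inP => [iX x xX | notcl].
  rewrite clE negb_and setD1K // rk_indep // rk_indep ?(indep_hered (subD1set X x)) //.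
  by rewrite (cardsD1 x X) xX addnC addn1 ltnn orbT.
apply/negPn/negP => dX; case: (basis_exists M X) => Y /andP[sYX iY] eY.
have /subsetPn[x xX xY] : ~~ (X \subset Y).
  by apply: contra dX => sXY; have -> : X = Y by apply/eqP; rewrite eqEsubset sXY.
have := notcl x xX; rewrite clE (subsetP sX) // setD1K // -eY /=.
by rewrite indep_leq_rk // subsetD1 sYX.
Qed.

Lemma cl_basis Z B : flat M Z -> B \subset Z -> indep M B -> #|B| = rk Z -> cl B = Z.
Proof.
move=> fZ sBZ iB cB; apply/eqP; rewrite eqEsubset cl_sub_flat //=.
have sB := indep_sub iB.
apply: flat_rk_subset (flat_cl sB) (cl_sub_flat fZ sBZ) (flat_sub_ground fZ) _.
by rewrite rk_cl // (rk_indep iB) cB.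
Qed.

Lemma cl_basis_setI B W : indep M B -> flat M W ->
  rk (cl B :&: W) = #|B :&: W| -> cl (B :&: W) = cl B :&: W.
Proof.
move=> iB fW rkBW; apply: cl_basis (flatI (flat_cl (indep_sub iB)) fW) _ _ (esym rkBW).
  by rewrite setSI // subset_cl ?indep_sub.
exact: indep_hered (subsetIl B W) iB.
Qed.

End MatroidClosure.

Definition has_chord (T : finType) (M : matroid T) (C : {set T}) : Prop :=
  exists (C1 C2 : {set T}) (e : T),
    [/\ circuit M C1, circuit M C2, C1 :&: C2 = [set e] & C = (C1 :|: C2) :\ e].

Section MatroidCircuits.
Variables (T : finType) (M : matroid T).
Local Notation E := (ground M).
Local Notation rk := (rk M).
Local Notation cl := (cl M).
Implicit Types X A B C D I : {set T}.

Lemma circuit_sub_ground C : circuit M C -> C \subset E.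
Proof. by case/and3P. Qed.

Lemma circuit_dep C : circuit M C -> ~~ indep M C.
Proof. by case/and3P. Qed.

Lemma circuit_indepD1 C x : circuit M C -> x \in C -> indep M (C :\ x).
Proof. by case/and3P => _ _ /forall_inP; apply. Qed.

Lemma circuit_minimal C D : circuit M C -> D \subset C -> ~~ indep M D -> D = C.
Proof.
move=> cC sDC dD; apply/eqP; rewrite eqEsubset sDC /=.
apply/subsetP => x xC; apply/negPn/negP => xD; move/negP: dD; apply.
by apply: indep_hered (circuit_indepD1 cC xC); rewrite subsetD1 sDC.
Qed.

Lemma indep_proper_circuit C D : circuit M C -> D \subset C -> D != C -> indep M D.
Proof. by move=> cC sDC; apply: contraNT => dD; rewrite (circuit_minimal cC sDC dD). Qed.

Lemma rk_circuit C x : circuit M C -> x \in C -> rk C = #|C :\ x|.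
Proof.
move=> cC xC; have iCx := circuit_indepD1 cC xC.
apply/eqP; rewrite eqn_leq -(rk_indep iCx) [rk (C :\ x) <= _]rkS ?subD1set // andbT (rk_indep iCx).
have := rk_leq_card M C; have := circuit_dep cC; rewrite indep_rkE (cardsD1 x C) xC.
lia.
Qed.

Lemma circuit_mem_cl C x : circuit M C -> x \in C -> x \in cl (C :\ x).
Proof.
move=> cC xC; rewrite clE (subsetP (circuit_sub_ground cC)) // setD1K //.
by rewrite (rk_circuit cC xC) (rk_indep (circuit_indepD1 cC xC)) leqnn.
Qed.

Lemma dep_setU1_cl X e : indep M X -> e \notin X -> e \in cl X -> ~~ indep M (e |: X).
Proof.
move=> iX eX; rewrite clE indep_rkE cardsU1 eX (rk_indep iX) => /andP[_ rke].
by apply/negP => /eqP rkeX; move: rke; rewrite rkeX addnC addn1 ltnn.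
Qed.

Lemma circuit_in_setU1 I e : indep M I -> e \in E -> ~~ indep M (e |: I) ->
  exists2 C, circuit M C & (C \subset e |: I) && (e \in C).
Proof.
move=> iI eE deI.
pose P D := (D \subset e |: I) && ~~ indep M D.
have PeI : P (e |: I) by rewrite /P subxx.
case: (@arg_minnP _ (e |: I) P (fun D => #|D|) PeI) => D /andP[sD dD] Dmin.
have iDx x : x \in D -> indep M (D :\ x).
  move=> xD; apply/negPn/negP => dDx.
  have := Dmin (D :\ x); rewrite /P dDx (subset_trans (subD1set _ _) sD).
  by rewrite (cardsD1 x D) xD add1n ltnn => /(_ isT).
have sDE : D \subset E by rewrite (subset_trans sD) // subUset sub1set eE indep_sub.
exists D; first by rewrite /circuit sDE dD; exact/forall_inP.
rewrite sD; apply: contraNT dD => eD; apply: indep_hered iI.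
apply/subsetP => y yD; move: (subsetP sD y yD); rewrite in_setU1.
by case: eqP => // ye; rewrite -ye yD in eD.
Qed.

Lemma circuit_elimination C1 C2 e : circuit M C1 -> circuit M C2 -> C1 != C2 ->
  e \in C1 -> e \in C2 -> ~~ indep M ((C1 :|: C2) :\ e).
Proof.
move=> c1 c2 n12 e1 e2.
have i12 : indep M (C1 :&: C2).
  apply: (indep_proper_circuit c1 (subsetIl _ _)); apply: contra n12 => /eqP e12.
  by rewrite -(circuit_minimal c2 (_ : C1 \subset C2) (circuit_dep c1)) // -e12 subsetIr.
have := rk_submod M C1 C2; rewrite (rk_circuit c1 e1) (rk_circuit c2 e2) (rk_indep i12).
have := cardsUI C1 C2; rewrite (cardsD1 e C1) (cardsD1 e C2) e1 e2.
rewrite (cardsD1 e (C1 :|: C2)) inE e1.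
move=> cardU rkU; apply/negP => iU.
have := indep_leq_rk (subD1set (C1 :|: C2) e) iU.
lia.
Qed.

Lemma notin_circuit_cl C X e : circuit M C -> X \subset C -> indep M X ->
  e \notin X -> e \in cl X -> e |: X != C -> e \notin C.
Proof.
move=> cC sXC iX eX eclX neC; apply/negP => eC; move/negP: (dep_setU1_cl iX eX eclX).
by apply; apply: indep_proper_circuit cC _ neC; rewrite subUset sub1set eC.
Qed.

Lemma has_chord_common_cl C A B e : circuit M C -> A :|: B = C -> A :&: B = set0 ->
  A != C -> B != C -> e \notin C -> e \in cl A -> e \in cl B -> indep M [set e] ->
  has_chord M C.
Proof.
move=> cC eAB dAB nAC nBC eC eclA eclB ie.
have sA : A \subset C by rewrite -eAB subsetUl.
have sB : B \subset C by rewrite -eAB subsetUr.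
have iA := indep_proper_circuit cC sA nAC.
have iB := indep_proper_circuit cC sB nBC.
have eE : e \in E by move: eclA; rewrite clE => /andP[].
have eA : e \notin A by apply: contra eC; apply/subsetP.
have eB : e \notin B by apply: contra eC; apply/subsetP.
have [C1 c1 /andP[s1 e1]] := circuit_in_setU1 iA eE (dep_setU1_cl iA eA eclA).
have [C2 c2 /andP[s2 e2]] := circuit_in_setU1 iB eE (dep_setU1_cl iB eB eclB).
have C12e : C1 :&: C2 \subset [set e].
  apply/subsetP => x /setIP[x1 x2]; rewrite inE; apply/negPn/negP => xe.
  move: (subsetP s1 x x1) (subsetP s2 x x2); rewrite !in_setU1 (negPf xe) /= => xA xB.
  by have := in_set0 x; rewrite -dAB inE xA xB.
have n12 : C1 != C2.
  apply: contraNneq (circuit_dep c1) => e12.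
  by apply: indep_hered ie; rewrite -[C1]setIid {2}e12.
have sD : (C1 :|: C2) :\ e \subset C.
  apply/subsetP => x /setD1P[xe /setUP[x1|x2]].
    by move: (subsetP s1 x x1); rewrite in_setU1 (negPf xe) => /(subsetP sA).
  by move: (subsetP s2 x x2); rewrite in_setU1 (negPf xe) => /(subsetP sB).
exists C1, C2, e; split => //.
  by apply/eqP; rewrite eqEsubset C12e sub1set inE e1 e2.
exact/esym/(circuit_minimal cC sD)/(circuit_elimination c1 c2 n12 e1 e2).
Qed.

End MatroidCircuits.

Section ModularFlats.
Variables (T : finType) (M : matroid T) (W : {set T}).
Hypothesis modW : modular_flat M W.
Local Notation E := (ground M).
Local Notation rk := (rk M).
Local Notation cl := (cl M).
Implicit Types X G K L B : {set T}.

Let flatW : flat M W. Proof. by case: modW. Qed.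
Let rk_modW G : flat M G -> rk W + rk G = rk (W :|: G) + rk (W :&: G).
Proof. by case: modW => _; apply. Qed.

Lemma modular_rkU G K : flat M G -> K \subset W ->
  rk (G :|: K) + rk (G :&: W) = rk G + rk ((G :&: W) :|: K).
Proof.
move=> fG sKW.
have [e1 e2 e3 e4] : [/\ G :|: ((G :&: W) :|: K) = G :|: K, G :&: ((G :&: W) :|: K) = G :&: W,
    (G :|: K) :|: W = W :|: G & (G :|: K) :&: W = (G :&: W) :|: K].
  by split; apply/setP => x; move: (subsetP sKW x); rewrite !inE;
    case: (x \in G); case: (x \in K); case: (x \in W) => // ->.
have := rk_submod M G ((G :&: W) :|: K); rewrite e1 e2.
have := rk_submod M (G :|: K) W; rewrite e3 e4.
have := rk_modW fG; rewrite setIC.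
lia.
Qed.

Lemma modular_clU G L : flat M G -> L \subset W ->
  cl (G :|: L) :&: W = cl ((G :&: W) :|: L).
Proof.
move=> fG sLW; have sG := flat_sub_ground fG; have sW := flat_sub_ground flatW.
have sGL : G :|: L \subset E by rewrite subUset sG (subset_trans sLW sW).
have sGW : G :|: W \subset E by rewrite subUset sG sW.
have sGWL : (G :&: W) :|: L \subset E.
  by rewrite subUset (subset_trans (subsetIl _ _) sG) (subset_trans sLW sW).
set F := cl (G :|: L).
have GLF : G :|: L \subset F := subset_cl sGL.
have rkWF : rk (W :|: F) = rk (W :|: G).
  apply/eqP; rewrite eqn_leq [rk (W :|: G) <= _]rkS ?setUS ?(subset_trans (subsetUl G L)) // andbT.
  rewrite [W :|: G]setUC -(rk_cl sGW) rkS // subUset clS ?setUS //.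
  by rewrite andbT (subset_trans (subsetUr G W)) ?subset_cl.
have h1 := rk_modW (flat_cl sGL); rewrite rkWF rk_cl // setIC in h1.
have h2 := modular_rkU fG sLW.
have h3 := rk_modW fG; rewrite setIC in h3.
have sub : cl ((G :&: W) :|: L) \subset F :&: W.
  apply: cl_sub_flat; first exact: flatI (flat_cl sGL) flatW.
  rewrite subUset !subsetI sLW subsetIr (subset_trans (subsetUr G L) GLF) !andbT.
  exact: subset_trans (subsetIl _ _) (subset_trans (subsetUl G L) GLF).
apply/eqP; rewrite eqEsubset sub andbT.
apply: flat_rk_subset (flat_cl sGWL) sub (subset_trans (subsetIl _ _) (cl_ground _ _)) _.
move: h1; rewrite -/F rk_cl //; lia.
Qed.

Lemma modular_cl_basisD1 B1 B0 x : indep M B1 -> B0 \subset B1 -> B0 \subset W ->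
  rk (cl B1 :&: W) = #|B0| -> x \in B0 -> cl (B1 :\ x) :&: W \subset cl (B0 :\ x).
Proof.
move=> iB1 s01 s0W rkB0 xB0.
have sB1 := indep_sub iB1; have sW := flat_sub_ground flatW.
have xB1 := subsetP s01 x xB0; have xW := subsetP s0W x xB0.
have sB1x : B1 :\ x \subset E := subset_trans (subD1set _ _) sB1.
have iB1x : indep M (B1 :\ x) := indep_hered (subD1set _ _) iB1.
have sB0x : B0 :\ x \subset B1 :\ x by apply: setSD.
have iB0x : indep M (B0 :\ x) := indep_hered sB0x iB1x.
have h1 := rk_modW (flat_cl sB1x).
have h2 := rk_modW (flat_cl sB1).
have eU : B1 :\ x :|: W = B1 :|: W.
  by apply/setP => y; rewrite !inE; case: (eqVneq y x) => [->|]; rewrite ?xW ?orbT.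
rewrite setUC rk_clU ?subUset ?sB1x ?sW // eU in h1.
rewrite setUC rk_clU ?subUset ?sB1 ?sW // in h2.
rewrite rk_cl // (rk_indep iB1x) in h1.
rewrite rk_cl // (rk_indep iB1) setIC rkB0 in h2.
have sA : cl (B0 :\ x) \subset cl (B1 :\ x) :&: W.
  apply: cl_sub_flat; first exact: flatI (flat_cl sB1x) flatW.
  by rewrite subsetI (subset_trans sB0x (subset_cl sB1x)) (subset_trans (subD1set _ _) s0W).
apply: flat_rk_subset (flat_cl (indep_sub iB0x)) sA (subset_trans (subsetIr _ _) sW) _.
rewrite rk_cl ?(indep_sub iB0x) // (rk_indep iB0x) setIC.
move: h2; rewrite (cardsD1 x B1) (cardsD1 x B0) xB1 xB0 !add1n !addnS => -[h2].
by rewrite -(leq_add2l (rk (B1 :|: W))) -h1 h2.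
Qed.

End ModularFlats.

Section RankAddsRow.
Variables (F : fieldType) (n : nat).

Lemma mxrank_adds_leq (v : 'rV[F]_n) m (A : 'M_(m, n)) :
  (\rank (v + A)%MS <= \rank A) = (v <= A)%MS.
Proof.
have [_ eqA] := mxrank_leqif_sup (addsmxSr v A).
by rewrite leq_eqVlt ltnNge mxrankS ?addsmxSr // orbF eq_sym eqA addsmx_sub submx_refl andbT.
Qed.

Lemma mxrank_adds_row (v : 'rV[F]_n) m (A : 'M_(m, n)) :
  v != 0%R -> ~~ (v <= A)%MS -> \rank (v + A)%MS = (\rank A).+1.
Proof.
move=> v0 vA; have := mxrank_sum_cap v A; rewrite rank_rV v0.
have : \rank (v :&: A)%MS <= \rank v := mxrankS (capmxSl v A).
have : \rank (v :&: A)%MS != \rank v.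
  rewrite (mxrank_leqif_eq (capmxSl v A)); apply: contra vA => /eqmxP capvA.
  by rewrite -capvA capmxSr.
rewrite rank_rV v0; lia.
Qed.

End RankAddsRow.

Lemma F2_scalerE r (c : 'F_2) (v : 'rV['F_2]_r) : (c *: v = 0 \/ c *: v = v)%R.
Proof.
have [->|->] : (c = 0 \/ c = 1)%R by case: c => -[|[|//]] ?; [left|right]; apply: val_inj.
  by left; rewrite scale0r.
by right; rewrite scale1r.
Qed.

Lemma F2_addvv r (v : 'rV['F_2]_r) : (v + v = 0)%R.
Proof.
by rewrite -{1 2}(scale1r v) -scalerDl (_ : 1 + 1 = 0 :> 'F_2)%R ?scale0r //; apply: val_inj.
Qed.

Lemma F2_mulmx11 r (u : 'M['F_2]_1) (v : 'rV['F_2]_r) : (u *m v = 0 \/ u *m v = v)%R.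
Proof. by rewrite [u]mx11_scalar mul_scalar_mx; apply: F2_scalerE. Qed.

Section RowsOf.
Variables (T : finType) (r : nat) (f : T -> 'rV['F_2]_r).
Implicit Types X Y : {set T}.

Lemma rows_of_subP X m (R : 'M['F_2]_(m, r)) :
  reflect (forall x, x \in X -> (f x <= R)%MS) (rows_of f X <= R)%MS.
Proof.
apply: (iffP row_subP) => [sXR x xX | sXR i]; last by rewrite rowK sXR ?enum_valP.
by have := sXR (enum_rank_in xX x); rewrite rowK enum_rankK_in.
Qed.

Lemma submx_rows_of X x : x \in X -> (f x <= rows_of f X)%MS.
Proof. by move: x; apply/rows_of_subP. Qed.

Lemma rows_ofS X Y : X \subset Y -> (rows_of f X <= rows_of f Y)%MS.
Proof. by move=> sXY; apply/rows_of_subP => x xX; rewrite submx_rows_of ?(subsetP sXY). Qed.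

Lemma rank_rows_ofU X Y :
  \rank (rows_of f (X :|: Y)) = \rank (rows_of f X + rows_of f Y)%MS.
Proof.
apply/eqmx_rank/andP; split; last by rewrite addsmx_sub !rows_ofS ?subsetUl ?subsetUr.
apply/rows_of_subP => y /setUP[yX|yY].
  exact: submx_trans (submx_rows_of yX) (addsmxSl _ _).
exact: submx_trans (submx_rows_of yY) (addsmxSr _ _).
Qed.

Lemma rank_rows_ofU1 x X :
  \rank (rows_of f (x |: X)) = \rank (f x + rows_of f X)%MS.
Proof.
apply/eqmx_rank/andP; split.
  apply/rows_of_subP => y /setU1P[->|yX]; first exact: addsmxSl.
  exact: submx_trans (submx_rows_of yX) (addsmxSr _ _).
by rewrite addsmx_sub submx_rows_of ?setU11 ?rows_ofS ?subsetUr.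
Qed.

End RowsOf.

Section BinaryPGRestriction.
Variables (T : finType) (M : matroid T) (S : {set T}) (r : nat) (f : T -> 'rV['F_2]_r).
Hypothesis f_inj : {in S &, injective f}.
Hypothesis f_im : f @: S = [set v : 'rV['F_2]_r | v != 0%R].
Hypothesis f_indep : forall X : {set T}, X \subset S -> indep M X = row_free (rows_of f X).
Local Notation rk := (rk M).
Local Notation cl := (cl M).
Implicit Types X Y : {set T}.

Lemma pg_neq0 x : x \in S -> f x != 0%R.
Proof. by move=> xS; have := imset_f f xS; rewrite f_im inE. Qed.

Lemma pg_indep1 x : x \in S -> indep M [set x].
Proof.
move=> xS; rewrite f_indep ?sub1set // /row_free eqn_leq rank_leq_row /= [in X in X <= _]cards1.
by have := mxrankS (submx_rows_of f (set11 x)); rewrite rank_rV pg_neq0.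
Qed.

Lemma pg_sub_ground : S \subset ground M.
Proof. by apply/subsetP => x xS; have := indep_sub (pg_indep1 xS); rewrite sub1set. Qed.

Lemma pg_rk X : X \subset S -> rk X = \rank (rows_of f X).
Proof.
move=> sX; have [Y /andP[sYX iY] eY] := basis_exists M X.
have sY := subset_trans sYX sX.
have rY : \rank (rows_of f Y) = #|Y| by apply/eqP; move: iY; rewrite f_indep.
apply/eqP; rewrite -eY eqn_leq -{1}rY mxrankS ?rows_ofS //= -rY mxrankS //.
apply/rows_of_subP => x xX; apply/negPn/negP => xY.
have xnY : x \notin Y by apply: contra xY; apply: submx_rows_of.
have sxY : x |: Y \subset X by rewrite subUset sub1set xX sYX.
have : indep M (x |: Y).
  rewrite f_indep ?(subset_trans sxY sX) // /row_free rank_rows_ofU1.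
  by rewrite mxrank_adds_row ?pg_neq0 ?(subsetP sX) // rY cardsU1 xnY.
by move/(indep_leq_rk sxY); rewrite cardsU1 xnY add1n -eY ltnn.
Qed.

Lemma pg_mem_clE X e : X \subset S -> e \in S -> (e \in cl X) = (f e <= rows_of f X)%MS.
Proof.
move=> sX eS; have seX : e |: X \subset S by rewrite subUset sub1set eS.
by rewrite clE (subsetP pg_sub_ground) //= !pg_rk // rank_rows_ofU1 mxrank_adds_leq.
Qed.

Lemma pg_cl_meet X Y : X \subset S -> Y \subset S -> rk (X :|: Y) < rk X + rk Y ->
  exists2 e, e \in S & (e \in cl X) && (e \in cl Y).
Proof.
move=> sX sY; rewrite !pg_rk ?subUset ?sX // rank_rows_ofU -mxrank_sum_cap.
rewrite -{1}[\rank (_ + _)%MS]addn0 ltn_add2l lt0n mxrank_eq0 => /rowV0Pn[v vXY v0].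
have /imsetP[e eS ev] : v \in f @: S by rewrite f_im inE.
exists e; rewrite // !pg_mem_clE // -ev.
by rewrite (submx_trans vXY (capmxSl _ _)) (submx_trans vXY (capmxSr _ _)).
Qed.

Lemma pg_sum_point x y : x \in S -> y \in S -> x != y ->
  exists z, [/\ z \in S, f z = (f x + f y)%R, z != x & z != y].
Proof.
move=> xS yS xy.
have /imsetP[z zS ez] : (f x + f y)%R \in f @: S.
  rewrite f_im inE; apply: contra xy => /eqP fxy; apply/eqP/f_inj => //.
  by rewrite -[f x]addr0 -(F2_addvv (f y)) addrA fxy add0r.
exists z; split => //; apply/eqP => zE.
  by move/eqP: (pg_neq0 yS); apply; apply: (@addrI _ (f x)); rewrite addr0 ez zE.
by move/eqP: (pg_neq0 xS); apply; apply: (@addIr _ (f y)); rewrite add0r ez zE.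
Qed.

Lemma pg_cl_sum x y z : x \in S -> y \in S -> z \in S -> f z = (f x + f y)%R ->
  z \in cl [set x; y].
Proof.
move=> xS yS zS ez; rewrite pg_mem_clE ?subUset ?sub1set ?xS ?yS // ez.
by apply: addmx_sub; apply: submx_rows_of; rewrite !inE eqxx ?orbT.
Qed.

End BinaryPGRestriction.

Section BinaryPG.
Variables (T : finType) (M : matroid T) (r : nat) (f : T -> 'rV['F_2]_r).
Local Notation E := (ground M).
Hypothesis f_inj : {in E &, injective f}.
Hypothesis f_im : f @: E = [set v : 'rV['F_2]_r | v != 0%R].
Hypothesis f_indep : forall X : {set T}, X \subset E -> indep M X = row_free (rows_of f X).
Local Notation rk := (rk M).
Local Notation cl := (cl M).
Implicit Types X Y C : {set T}.

Lemma binary_pg_chordal : chordal M.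
Proof.
move=> C cC C4; have sC := circuit_sub_ground cC.
have /card_gt1P[a [b [aC bC ab]]] : 1 < #|C| by apply: leq_trans C4.
set A := [set a; b]; set B := C :\: A.
have sA : A \subset C by rewrite subUset !sub1set aC bC.
have sB : B \subset C := subsetDl C A.
have cardA : #|A| = 2 by rewrite cards2 ab.
have AB : A :|: B = C by rewrite -{1}(setIidPr sA) setID.
have dAB : A :&: B = set0 by rewrite setIDA setDIl setDv set0I.
have nAC : A != C by apply: contraTneq C4 => <-; rewrite cardA.
have nBC : B != C by apply: contraTneq aC => <-; rewrite inE set21.
have iA := indep_proper_circuit cC sA nAC; have iB := indep_proper_circuit cC sB nBC.
have rkAB : rk (A :|: B) < rk A + rk B.
  rewrite (rk_indep iA) (rk_indep iB) -cardsUI dAB cards0 addn0 AB (rk_circuit cC aC).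
  by rewrite [#|C|](cardsD1 a C) aC.
have [e eE /andP[eA eB]] :=
  pg_cl_meet f_im f_indep (subset_trans sA sC) (subset_trans sB sC) rkAB.
have eC : e \notin C.
  have [eA'|eA'] := boolP (e \in A); last first.
    apply: notin_circuit_cl cC sA iA eA' eA _; apply: contraTneq C4 => <-.
    by rewrite -ltnNge cardsU1 cardA; case: (e \notin A).
  have eB' : e \notin B by rewrite inE eA'.
  apply: notin_circuit_cl cC sB iB eB' eB _; apply: contraTneq ab => eBC.
  by move: aC bC; rewrite -eBC !in_setU1 !inE !eqxx orbT /= !orbF => /eqP-> /eqP->; rewrite eqxx.
exact: has_chord_common_cl cC AB dAB nAC nBC eC eA eB (pg_indep1 f_im f_indep eE).
Qed.

Lemma binary_pg_flat_point X v : flat M X -> (v <= rows_of f X)%MS -> v != 0%R ->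
  exists2 x, x \in X & v = f x.
Proof.
move=> fX vX v0; have /imsetP[e eE ve] : v \in f @: E by rewrite f_im inE.
exists e => //; apply: (subsetP (cl_sub_flat fX (subxx X))).
by rewrite (pg_mem_clE f_im f_indep) ?(flat_sub_ground fX) // -ve.
Qed.

Lemma binary_pg_modular X Y : flat M X -> flat M Y ->
  rk X + rk Y = rk (X :|: Y) + rk (X :&: Y).
Proof.
move=> fX fY; have sX := flat_sub_ground fX; have sY := flat_sub_ground fY.
have sXY : X :|: Y \subset E by rewrite subUset sX sY.
have sIXY : X :&: Y \subset E := subset_trans (subsetIl _ _) sX.
rewrite !(pg_rk f_im f_indep) // rank_rows_ofU -mxrank_sum_cap; congr (_ + _).
apply/eqmx_rank/andP; split; last by rewrite sub_capmx !rows_ofS ?subsetIl ?subsetIr.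
apply/row_subP => i; set v := row i _.
have [->|v0] := eqVneq v 0%R; first exact: sub0mx.
have vX : (v <= rows_of f X)%MS := submx_trans (row_sub _ _) (capmxSl _ _).
have vY : (v <= rows_of f Y)%MS := submx_trans (row_sub _ _) (capmxSr _ _).
have [x xX vx] := binary_pg_flat_point fX vX v0.
have [y yY vy] := binary_pg_flat_point fY vY v0.
have xy : x = y by apply: f_inj; rewrite -?vx -?vy ?(subsetP sX x) ?(subsetP sY y).
by rewrite vx submx_rows_of // inE xX xy.
Qed.

Lemma binary_pg_cl2 x y z : x \in E -> y \in E -> z \in cl [set x; y] ->
  z != x -> z != y -> f z = (f x + f y)%R.
Proof.
move=> xE yE zcl zx zy; have zE := subsetP (cl_ground M _) z zcl.
have : (f z <= f x + f y)%MS.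
  rewrite (pg_mem_clE f_im f_indep) ?subUset ?sub1set ?xE ?yE // in zcl.
  apply: submx_trans zcl _; apply/rows_of_subP => w /set2P[]->.
    exact: addsmxSl.
  exact: addsmxSr.
case/sub_addsmxP => -[u1 u2] /= fz.
have neq_fz w : w \in E -> z != w -> f z != f w.
  by move=> wE; apply: contra => /eqP/f_inj ->.
case: (F2_mulmx11 u1 (f x)) => e1; case: (F2_mulmx11 u2 (f y)) => e2; rewrite e1 e2 in fz.
- by move: (pg_neq0 f_im zE); rewrite fz addr0 eqxx.
- by move: (neq_fz y yE zy); rewrite fz add0r eqxx.
- by move: (neq_fz x xE zx); rewrite fz addr0 eqxx.
- by [].
Qed.

Lemma binary_pg_restr_flat S : binary_pg_on M S -> flat M S.
Proof.
case=> r' [g [g_inj g_im g_indep]]; have sS := pg_sub_ground g_im g_indep.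
have sum_mem x y : x \in S -> y \in S -> x != y -> (f x + f y)%R \in f @: S.
  move=> xS yS xy; have [z [zS gz zx zy]] := pg_sum_point g_inj g_im xS yS xy.
  have zcl := pg_cl_sum g_im g_indep xS yS zS gz.
  by rewrite -(binary_pg_cl2 (subsetP sS x xS) (subsetP sS y yS) zcl zx zy) imset_f.
have span_mem v : (v <= rows_of f S)%MS -> v = 0%R \/ v \in f @: S.
  case/submxP => u ->; rewrite mulmx_sum_row.
  apply: (big_ind (fun w => w = 0%R \/ w \in f @: S)); first by left.
    move=> _ _ [->|/imsetP[x xS ->]] [->|/imsetP[y yS ->]]; rewrite ?add0r ?addr0;
      rewrite ?imset_f; auto.
    by have [->|xy] := eqVneq x y; [left; apply: F2_addvv | right; apply: sum_mem].
  move=> i _; rewrite rowK; have [->|->] := F2_scalerE (u 0%R i) (f (enum_val i)); first by left.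
  by right; rewrite imset_f ?enum_valP.
apply: (flat_of_cl_sub sS); apply/subsetP => e ecl; have eE := subsetP (cl_ground M S) e ecl.
rewrite (pg_mem_clE f_im f_indep) // in ecl.
have [/eqP|/imsetP[s sS' fes]] := span_mem _ ecl; first by rewrite (negPf (pg_neq0 f_im eE)).
by rewrite (f_inj eE (subsetP sS s sS') fes).
Qed.

Lemma binary_pg_modular_flat S : binary_pg_on M S -> modular_flat M S.
Proof.
move=> pgS; have fS := binary_pg_restr_flat pgS.
by split=> // X fX; apply: binary_pg_modular.
Qed.

End BinaryPG.

(* [is_gpc] with the connecting set named [W] and modular on both sides, which
   makes the notion symmetric in [M1] and [M2]. *)
Record modular_gpc (T : finType) (M1 M2 M : matroid T) (W : {set T}) : Prop := {
  gpc_ground : ground M = ground M1 :|: ground M2;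
  gpc_meet : ground M1 :&: ground M2 = W;
  gpc_modular1 : modular_flat M1 W;
  gpc_modular2 : modular_flat M2 W;
  gpc_indep : forall X : {set T}, X \subset W -> indep M1 X = indep M2 X;
  gpc_flat : forall Z : {set T}, flat M Z <->
     [/\ Z \subset ground M, flat M1 (Z :&: ground M1) & flat M2 (Z :&: ground M2)] }.

Lemma modular_gpc_sym (T : finType) (M1 M2 M : matroid T) W :
  modular_gpc M1 M2 M W -> modular_gpc M2 M1 M W.
Proof.
case=> gE gW g1 g2 gI gF; split => //; first by rewrite setUC.
- by rewrite setIC.
- by move=> X sX; rewrite gI.
- by move=> Z; rewrite gF; split; case.
Qed.

Section GpcClosure.
Variables (T : finType) (M1 M2 M : matroid T) (W : {set T}).
Hypothesis G : modular_gpc M1 M2 M W.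
Local Notation E1 := (ground M1).
Local Notation E2 := (ground M2).
Local Notation E := (ground M).
Implicit Types X Y Z B C F : {set T}.

Lemma flatW1 : flat M1 W. Proof. by case: (gpc_modular1 G). Qed.
Lemma flatW2 : flat M2 W. Proof. by case: (gpc_modular2 G). Qed.
Lemma subW1 : W \subset E1. Proof. by rewrite -(gpc_meet G) subsetIl. Qed.
Lemma subW2 : W \subset E2. Proof. by rewrite -(gpc_meet G) subsetIr. Qed.
Lemma subE1 : E1 \subset E. Proof. by rewrite (gpc_ground G) subsetUl. Qed.
Lemma subE2 : E2 \subset E. Proof. by rewrite (gpc_ground G) subsetUr. Qed.

Lemma mem_W x : x \in E1 -> x \in E2 -> x \in W.
Proof. by move=> x1 x2; rewrite -(gpc_meet G) inE x1 x2. Qed.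

Lemma setI2W Z : Z \subset E1 -> Z :&: E2 = Z :&: W.
Proof. by move=> sZ; rewrite -(gpc_meet G) setIA (setIidPl sZ). Qed.

Lemma setI1W Z : Z \subset E2 -> Z :&: E1 = Z :&: W.
Proof. by move=> sZ; rewrite -(gpc_meet G) [E1 :&: E2]setIC setIA (setIidPl sZ). Qed.

Lemma setI12 Z : Z \subset E -> (Z :&: E1) :|: (Z :&: E2) = Z.
Proof. by move=> sZ; rewrite -setIUr -(gpc_ground G) (setIidPl sZ). Qed.

Lemma rkW X : X \subset W -> rk M1 X = rk M2 X.
Proof.
move=> sX; apply: eq_bigl => Y; case sYX: (Y \subset X) => //=.
exact/(gpc_indep G)/(subset_trans sYX sX).
Qed.

Lemma clW X : X \subset W -> cl M1 X = cl M2 X.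
Proof.
move=> sX; apply/setP => x; have [xW|xW] := boolP (x \in W).
  have sxX : x |: X \subset W by rewrite subUset sub1set xW sX.
  by rewrite !clE (subsetP subW1) ?(subsetP subW2) //= !rkW.
have cl1W := cl_sub_flat flatW1 sX; have cl2W := cl_sub_flat flatW2 sX.
by apply/idP/idP => [/(subsetP cl1W)|/(subsetP cl2W)]; rewrite (negPf xW).
Qed.

Lemma flatW X : X \subset W -> flat M1 X -> flat M2 X.
Proof.
move=> sX fX; apply: flat_of_cl_sub (subset_trans sX subW2) _.
by rewrite -clW // cl_flat.
Qed.

Lemma flat_setI1 Z : flat M Z -> flat M1 (Z :&: E1).
Proof. by case/(gpc_flat G). Qed.

Lemma flat_setI2 Z : flat M Z -> flat M2 (Z :&: E2).
Proof. by case/(gpc_flat G). Qed.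

Lemma flat_lift F : flat M1 F -> flat M F.
Proof.
move=> fF; have sF := flat_sub_ground fF.
apply/(gpc_flat G); split; rewrite ?(subset_trans sF subE1) ?(setIidPl sF) //.
by rewrite setI2W //; apply/flatW/flatI/flatW1; rewrite ?subsetIr.
Qed.

Lemma mem_cl1E X x : X \subset E1 -> x \in E1 -> (x \in cl M X) = (x \in cl M1 X).
Proof.
move=> sX xE1; have sXE := subset_trans sX subE1.
apply/idP/idP => xcl.
  exact: subsetP (cl_sub_flat (flat_lift (flat_cl sX)) (subset_cl sX)) x xcl.
have sXcl : X \subset cl M X :&: E1 by rewrite subsetI subset_cl.
by have := subsetP (cl_sub_flat (flat_setI1 (flat_cl sXE)) sXcl) x xcl; case/setIP.
Qed.

Lemma indep1E X : X \subset E1 -> indep M X = indep M1 X.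
Proof.
move=> sX; rewrite (indep_clE (subset_trans sX subE1)) (indep_clE sX).
apply: eq_forallb_in => x xX.
by rewrite mem_cl1E ?(subsetP sX) // (subset_trans (subD1set _ _) sX).
Qed.

Lemma rk1E X : X \subset E1 -> rk M X = rk M1 X.
Proof.
move=> sX; apply: eq_bigl => Y; case sYX: (Y \subset X) => //=.
exact/indep1E/(subset_trans sYX sX).
Qed.

Lemma circuit1E C : C \subset E1 -> circuit M C = circuit M1 C.
Proof.
move=> sC; rewrite /circuit sC (subset_trans sC subE1) indep1E //=; congr (_ && _).
by apply: eq_forallb_in => x xC; rewrite indep1E // (subset_trans (subD1set _ _) sC).
Qed.

(* The trace [cl M X :&: W] of a closure, computed from the two sides. *)
Definition trace_cl X := cl M1 ((cl M1 (X :&: E1) :&: W) :|: (cl M2 (X :&: E2) :&: W)).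

Lemma trace_cl_sub X : trace_cl X \subset W.
Proof. by apply: cl_sub_flat flatW1 _; rewrite subUset !subsetIr. Qed.

Definition cl_side1 X := cl M1 ((X :&: E1) :|: trace_cl X).
Definition cl_side2 X := cl M2 ((X :&: E2) :|: trace_cl X).

Lemma side1_sub X : (X :&: E1) :|: trace_cl X \subset E1.
Proof. by rewrite subUset subsetIr (subset_trans (trace_cl_sub X) subW1). Qed.

Lemma side2_sub X : (X :&: E2) :|: trace_cl X \subset E2.
Proof. by rewrite subUset subsetIr (subset_trans (trace_cl_sub X) subW2). Qed.

Lemma cl_sides_setIW X : X \subset E ->
  cl_side1 X :&: W = trace_cl X /\ cl_side2 X :&: W = trace_cl X.
Proof.
move=> sX; set L := trace_cl X; have sLW := trace_cl_sub X.
have sJ : (cl M1 (X :&: E1) :&: W) :|: (cl M2 (X :&: E2) :&: W) \subset W.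
  by rewrite subUset !subsetIr.
have sJL := subset_cl (subset_trans sJ subW1).
have fL1 : flat M1 L := flat_cl (subset_trans sJ subW1).
have fL2 : flat M2 L := flatW sLW fL1.
rewrite /cl_side1 /cl_side2 -(cl_clU (side1_sub X)) -(cl_clU (side2_sub X)).
rewrite (modular_clU (gpc_modular1 G) (flat_cl (subsetIr X E1)) sLW).
rewrite (modular_clU (gpc_modular2 G) (flat_cl (subsetIr X E2)) sLW).
rewrite (setUidPr (subset_trans (subsetUl _ _) sJL)) (setUidPr (subset_trans (subsetUr _ _) sJL)).
by rewrite (cl_flat fL1) (cl_flat fL2).
Qed.

Lemma cl_sides_setI X : X \subset E ->
  (cl_side1 X :|: cl_side2 X) :&: E1 = cl_side1 X /\
  (cl_side1 X :|: cl_side2 X) :&: E2 = cl_side2 X.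
Proof.
move=> sX; have [trace1 trace2] := cl_sides_setIW sX.
have Z1E : cl_side1 X \subset E1 := cl_ground _ _.
have Z2E : cl_side2 X \subset E2 := cl_ground _ _.
rewrite !setIUl (setIidPl Z1E) (setIidPl Z2E) (setI1W Z2E) (setI2W Z1E) trace1 trace2.
split; [apply/setUidPl | apply/setUidPr].
  exact: subset_trans (subsetUr _ _) (subset_cl (side1_sub X)).
exact: subset_trans (subsetUr _ _) (subset_cl (side2_sub X)).
Qed.

Lemma trace_cl_sub_flat X Y : flat M Y -> X \subset Y -> trace_cl X \subset Y.
Proof.
move=> fY sXY; have fY1 := flat_setI1 fY; have fY2 := flat_setI2 fY.
have YW : Y :&: E2 :&: W = Y :&: E1 :&: W by rewrite -!setIA (setIidPr subW1) (setIidPr subW2).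
apply: subset_trans (subsetIl Y E1); apply: subset_trans (subsetIl _ W).
apply: cl_sub_flat (flatI fY1 flatW1) _; rewrite subUset -{2}YW.
by rewrite !setSI // cl_sub_flat // setSI.
Qed.

Lemma cl_gpcE X : X \subset E -> cl M X = cl_side1 X :|: cl_side2 X.
Proof.
move=> sX; have sLW := trace_cl_sub X; have [side1 side2] := cl_sides_setI sX.
have fZ : flat M (cl_side1 X :|: cl_side2 X).
  apply/(gpc_flat G); rewrite side1 side2 (flat_cl (side1_sub X)) (flat_cl (side2_sub X)).
  rewrite subUset.
  by rewrite (subset_trans (cl_ground _ _) subE1) (subset_trans (cl_ground _ _) subE2).
apply/eqP; rewrite eqEsubset cl_sub_flat //=; last first.
  rewrite -{1}(setI12 sX); apply: setUSS.
    exact: subset_trans (subsetUl _ _) (subset_cl (side1_sub X)).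
  exact: subset_trans (subsetUl _ _) (subset_cl (side2_sub X)).
have LclX : trace_cl X \subset cl M X := trace_cl_sub_flat (flat_cl sX) (subset_cl sX).
have fX1 := flat_setI1 (flat_cl sX); have fX2 := flat_setI2 (flat_cl sX).
rewrite subUset; apply/andP; split.
  apply: subset_trans (subsetIl _ E1); apply: cl_sub_flat fX1 _.
  by rewrite subUset setSI ?subset_cl // subsetI LclX (subset_trans sLW subW1).
apply: subset_trans (subsetIl _ E2); apply: cl_sub_flat fX2 _.
by rewrite subUset setSI ?subset_cl // subsetI LclX (subset_trans sLW subW2).
Qed.

Lemma cl_gpc_setI X : X \subset E ->
  [/\ cl M X :&: E1 = cl_side1 X, cl M X :&: E2 = cl_side2 X & cl M X :&: W = trace_cl X].
Proof.
move=> sX; have [side1 side2] := cl_sides_setI sX; rewrite cl_gpcE // side1 side2.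
by rewrite -(setIidPr subW1) setIA side1 (cl_sides_setIW sX).1.
Qed.

Lemma notin_cl_gpc B1 X x : indep M1 B1 -> x \in B1 -> X \subset E ->
  X :&: E1 \subset cl M1 (B1 :\ x) -> trace_cl X \subset cl M1 (B1 :\ x) -> x \notin cl M X.
Proof.
move=> iB1 xB1 sX X1C1 LC1; have sB1 := indep_sub iB1.
have fC1 := flat_cl (subset_trans (subD1set B1 x) sB1).
apply/negP => xcl; have : x \in cl M X :&: E1 by rewrite inE xcl (subsetP sB1).
case: (cl_gpc_setI sX) => -> _ _; move/(subsetP (cl_sub_flat fC1 _)).
rewrite subUset X1C1 LC1 => /(_ isT) xC1.
by move: iB1; rewrite (indep_clE sB1) => /forall_inP/(_ x xB1); rewrite xC1.
Qed.

Lemma notin_cl_basisU_outW B1 B2 x : indep M1 B1 -> B2 \subset E2 -> B1 :&: W \subset B2 ->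
  cl M2 B2 :&: W \subset cl M1 (B1 :\ x) -> x \in B1 -> x \notin W ->
  x \notin cl M ((B1 :|: B2) :\ x).
Proof.
move=> iB1 sB2 B1W clB2 xB1 xW; have sB1 := indep_sub iB1.
set X := (B1 :|: B2) :\ x.
have sX : X \subset E.
  rewrite (subset_trans (subD1set _ _)) // subUset.
  by rewrite (subset_trans sB1 subE1) (subset_trans sB2 subE2).
have sB1x : B1 :\ x \subset E1 := subset_trans (subD1set _ _) sB1.
have fC1 : flat M1 (cl M1 (B1 :\ x)) := flat_cl sB1x.
have X1C1 : X :&: E1 \subset cl M1 (B1 :\ x).
  apply/subsetP => y /setIP[/setD1P[yx /setUP[yB1|yB2]] yE1].
    by rewrite (subsetP (subset_cl sB1x)) // in_setD1 yx.
  by rewrite (subsetP clB2) // inE (mem_W yE1 (subsetP sB2 y yB2)) (subsetP (subset_cl sB2)).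
have X2B2 : X :&: E2 \subset B2.
  apply/subsetP => y /setIP[/setD1P[_ /setUP[yB1|//]] yE2].
  by apply: (subsetP B1W); rewrite inE yB1 (mem_W (subsetP sB1 y yB1) yE2).
apply: (notin_cl_gpc iB1 xB1 sX X1C1).
apply: (cl_sub_flat fC1); rewrite subUset; apply/andP; split.
  exact: subset_trans (subsetIl _ _) (cl_sub_flat fC1 X1C1).
exact: subset_trans (setSI W (clS M2 X2B2)) clB2.
Qed.

Lemma notin_cl_basisU_inW B1 B2 x : indep M1 B1 -> indep M2 B2 -> B1 :&: W = B2 :&: W ->
  x \in B1 -> x \in W ->
  cl M1 (B1 :\ x) :&: W \subset cl M1 ((B1 :&: W) :\ x) ->
  cl M2 (B2 :\ x) :&: W \subset cl M2 ((B2 :&: W) :\ x) ->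
  x \notin cl M ((B1 :|: B2) :\ x).
Proof.
move=> iB1 iB2 B12W xB1 xW clB1 clB2.
have sB1 := indep_sub iB1; have sB2 := indep_sub iB2.
set X := (B1 :|: B2) :\ x.
have sX : X \subset E.
  rewrite (subset_trans (subD1set _ _)) // subUset.
  by rewrite (subset_trans sB1 subE1) (subset_trans sB2 subE2).
have XB y : y \in X -> y \in E1 -> y \in E2 -> y \in B1 :\ x /\ y \in B2 :\ x.
  move=> /setD1P[yx /setUP yB] yE1 yE2; rewrite !in_setD1 yx.
  have : y \in B1 :&: W = (y \in B2 :&: W) by rewrite B12W.
  rewrite !inE (mem_W yE1 yE2) !andbT /= => eqB.
  by case: yB => yB; [rewrite -eqB | rewrite eqB]; rewrite yB.
have X1B1 : X :&: E1 \subset B1 :\ x.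
  apply/subsetP => y /setIP[yX yE1]; have [yE2|yE2] := boolP (y \in E2); first by case: (XB y).
  by move: yX => /setD1P[yx /setUP[yB1|/(subsetP sB2)]]; rewrite ?in_setD1 ?yx ?(negPf yE2).
have X2B2 : X :&: E2 \subset B2 :\ x.
  apply/subsetP => y /setIP[yX yE2]; have [yE1|yE1] := boolP (y \in E1); first by case: (XB y).
  by move: yX => /setD1P[yx /setUP[/(subsetP sB1)|yB2]]; rewrite ?in_setD1 ?yx ?(negPf yE1).
have sB0x : (B1 :&: W) :\ x \subset W := subset_trans (subD1set _ _) (subsetIr _ _).
have fC0 : flat M1 (cl M1 ((B1 :&: W) :\ x)) := flat_cl (subset_trans sB0x subW1).
have sB1x : B1 :\ x \subset E1 := subset_trans (subD1set _ _) sB1.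
apply: (notin_cl_gpc iB1 xB1 sX (subset_trans X1B1 (subset_cl sB1x))).
apply: subset_trans (clS M1 (setSD _ (subsetIl B1 W))); apply: (cl_sub_flat fC0).
rewrite subUset (subset_trans (setSI W (clS M1 X1B1)) clB1) /=.
by rewrite (clW sB0x) B12W (subset_trans (setSI W (clS M2 X2B2)) clB2).
Qed.

Lemma cl1_sub B : B \subset E1 -> cl M1 B \subset cl M B.
Proof.
move=> sB; apply/subsetP => z zcl.
by rewrite (mem_cl1E sB (subsetP (cl_ground M1 B) z zcl)).
Qed.

End GpcClosure.

Section GpcRank.
Variables (T : finType) (M1 M2 M : matroid T) (W : {set T}).
Hypothesis G : modular_gpc M1 M2 M W.
Let G' := modular_gpc_sym G.
Local Notation E1 := (ground M1).
Local Notation E2 := (ground M2).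
Local Notation E := (ground M).
Local Notation trace_cl := (trace_cl M1 M2 W).
Implicit Types X Y Z B C F S : {set T}.

Lemma indep_gpc_basisU B1 B2 : indep M1 B1 -> indep M2 B2 -> B1 :&: W = B2 :&: W ->
  rk M1 (cl M1 B1 :&: W) = #|B1 :&: W| -> rk M2 (cl M2 B2 :&: W) = #|B2 :&: W| ->
  indep M (B1 :|: B2).
Proof.
move=> iB1 iB2 B12W rkB1 rkB2; have sB1 := indep_sub iB1; have sB2 := indep_sub iB2.
have cl10 := cl_basis_setI iB1 (flatW1 G) rkB1.
have cl20 := cl_basis_setI iB2 (flatW2 G) rkB2; rewrite -B12W in cl20.
have sB : B1 :|: B2 \subset E.
  by rewrite subUset (subset_trans sB1 (subE1 G)) (subset_trans sB2 (subE2 G)).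
rewrite (indep_clE sB); apply/forall_inP => x xB; have [xW|xW] := boolP (x \in W).
  have xB1W : x \in B1 :&: W.
    by case/setUP: xB => xBi; [|rewrite B12W]; rewrite inE xBi xW.
  have xB1 : x \in B1 by case/setIP: xB1W.
  apply: (notin_cl_basisU_inW G iB1 iB2 B12W xB1 xW).
    by apply: (modular_cl_basisD1 (gpc_modular1 G)); rewrite ?subsetIl ?subsetIr.
  by apply: (modular_cl_basisD1 (gpc_modular2 G)); rewrite ?subsetIl ?subsetIr // -B12W.
have B0x B : B1 :&: W \subset B -> B1 :&: W \subset B :\ x.
  by move=> sB0; rewrite subsetD1 sB0 inE (negPf xW) andbF.
case/setUP: xB => [xB1|xB2].
  apply: (notin_cl_basisU_outW G iB1 sB2 _ _ xB1 xW); first by rewrite B12W subsetIl.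
  by rewrite -cl20 -(clW G (subsetIr B1 W)) clS // B0x // subsetIl.
rewrite setUC; apply: (notin_cl_basisU_outW G' iB2 sB1 _ _ xB2 xW).
  by rewrite -B12W subsetIl.
by rewrite -cl10 (clW G (subsetIr B1 W)) clS // B0x // B12W subsetIl.
Qed.

Lemma rk_gpc_flat Z : flat M Z ->
  rk M Z + rk M1 (Z :&: W) = rk M1 (Z :&: E1) + rk M2 (Z :&: E2).
Proof.
move=> fZ; have sZ := flat_sub_ground fZ.
have fZ1 := flat_setI1 G fZ; have fZ2 := flat_setI2 G fZ.
have ZW1 : Z :&: E1 :&: W = Z :&: W by rewrite -setIA (setIidPr (subW1 G)).
have ZW2 : Z :&: E2 :&: W = Z :&: W by rewrite -setIA (setIidPr (subW2 G)).
have [B0 [_ s0 i0 c0]] := indep_extend (sub0set (Z :&: W)) (indep0 M1).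
have s0W : B0 \subset W := subset_trans s0 (subsetIr _ _).
have s0Z1 : B0 \subset Z :&: E1 by rewrite -ZW1 in s0; apply: subset_trans s0 (subsetIl _ _).
have s0Z2 : B0 \subset Z :&: E2 by rewrite -ZW2 in s0; apply: subset_trans s0 (subsetIl _ _).
have i0' : indep M2 B0 by rewrite -(gpc_indep G).
have [B1 [s01 s1 i1 c1]] := indep_extend s0Z1 i0.
have [B2 [s02 s2 i2 c2]] := indep_extend s0Z2 i0'.
have c0' : #|B0| = rk M2 (Z :&: W) by rewrite -(rkW G (subsetIr _ _)).
have t1 : B1 :&: W = B0 by apply: (basis_setI i1 s1 s01 s0W); rewrite ZW1.
have t2 : B2 :&: W = B0 by apply: (basis_setI i2 s2 s02 s0W); rewrite ZW2.
have cl1B1 : cl M1 B1 = Z :&: E1 := cl_basis fZ1 s1 i1 c1.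
have cl2B2 : cl M2 B2 = Z :&: E2 := cl_basis fZ2 s2 i2 c2.
have sB1 := indep_sub i1; have sB2 := indep_sub i2.
have iB : indep M (B1 :|: B2).
  by apply: (indep_gpc_basisU i1 i2); rewrite ?t1 ?t2 ?cl1B1 ?cl2B2 ?ZW1 ?ZW2.
have sB : B1 :|: B2 \subset E := indep_sub iB.
have rkZ : rk M Z = #|B1 :|: B2|.
  apply/eqP; rewrite eqn_leq indep_leq_rk ?andbT //; last first.
    by rewrite subUset (subset_trans s1 (subsetIl _ _)) (subset_trans s2 (subsetIl _ _)).
  rewrite -(rk_indep iB) -(rk_cl sB) rkS // -(setI12 G sZ) -cl1B1 -cl2B2.
  rewrite subUset (subset_trans (cl1_sub G sB1) (clS M (subsetUl B1 B2))).
  exact: subset_trans (cl1_sub G' sB2) (clS M (subsetUr B1 B2)).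
have B12 : B1 :&: B2 = B0.
  have sW12 : B1 :&: B2 \subset W.
    by apply/subsetP => y /setIP[y1 y2]; apply: (mem_W G (subsetP sB1 y y1) (subsetP sB2 y y2)).
  by rewrite -(setIidPl sW12) setIAC t1; apply/setIidPl.
by rewrite rkZ -c0 -c1 -c2 -(cardsUI B1 B2) B12.
Qed.

Lemma rk_setU_flat_gpc F S : flat M F -> S \subset E1 ->
  rk M (S :|: F) + rk M1 (F :&: E1) = rk M F + rk M1 (S :|: (F :&: E1)).
Proof.
move=> fF sS; have sF := flat_sub_ground fF; have fF2 := flat_setI2 G fF.
set X := S :|: F; set F1 := F :&: E1; set F2 := F :&: E2.
have sX : X \subset E by rewrite subUset (subset_trans sS (subE1 G)) sF.
have X1 : X :&: E1 = S :|: F1 by rewrite setIUl (setIidPl sS).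
have X2 : X :&: E2 = (S :&: W) :|: F2 by rewrite setIUl (setI2W G sS).
have sX1 : X :&: E1 \subset E1 := subsetIr _ _.
set J1 := cl M1 (X :&: E1) :&: W.
have sJ1 : J1 \subset W := subsetIr _ _.
have F2W : F2 :&: W = F :&: W by rewrite -setIA (setIidPr (subW2 G)).
have FWJ1 : F :&: W \subset J1.
  rewrite subsetI subsetIr andbT (subset_trans _ (subset_cl sX1)) // X1.
  by rewrite (subset_trans _ (subsetUr S F1)) // setIS // (subW1 G).
have SWJ1 : S :&: W \subset J1.
  rewrite subsetI subsetIr andbT (subset_trans _ (subset_cl sX1)) // X1.
  exact: subset_trans (subsetIl _ _) (subsetUl _ _).
have J2J1 : cl M2 (X :&: E2) :&: W \subset J1.
  have sJW : (S :&: W) :|: (F :&: W) \subset W by rewrite subUset !subsetIr.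
  rewrite X2 setUC (modular_clU (gpc_modular2 G) fF2 (subsetIr S W)) F2W setUC -(clW G sJW).
  by apply: cl_sub_flat (flatI (flat_cl sX1) (flatW1 G)) _; rewrite subUset SWJ1.
have LJ1 : trace_cl X = J1.
  by rewrite /trace_cl -/J1 (setUidPl J2J1) cl_flat // (flatI (flat_cl sX1) (flatW1 G)).
have sJ1E1 := subset_trans sJ1 (subW1 G); have sJ1E2 := subset_trans sJ1 (subW2 G).
have rkX := rk_gpc_flat (flat_cl sX); have [clX1 clX2 clXW] := cl_gpc_setI G sX.
rewrite clX1 clX2 clXW /cl_side1 /cl_side2 LJ1 (rk_cl sX) !rk_cl ?subUset ?subsetIr // in rkX.
rewrite rk_setU_cl ?subsetIl // in rkX.
rewrite (_ : X :&: E2 :|: J1 = F2 :|: J1) in rkX; last first.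
  by rewrite X2 -setUA [F2 :|: J1]setUC setUA (setUidPr SWJ1) setUC.
have := modular_rkU (gpc_modular2 G) fF2 sJ1.
rewrite F2W (setUidPr FWJ1) -(rkW G sJ1) -(rkW G (subsetIr F W)).
have := rk_gpc_flat fF; rewrite -X1 -/F1 -/F2.
move: rkX; clear -fF; lia.
Qed.

Lemma modular_flat_lift S : S \subset E1 -> modular_flat M1 S -> modular_flat M S.
Proof.
move=> sS [fS modS]; split=> [|F fF]; first by apply: (flat_lift G fS).
have sSF : S :&: F \subset E1 := subset_trans (subsetIl S F) sS.
have SF : S :&: F = S :&: (F :&: E1) by rewrite setIA (setIidPl sSF).
have := rk_setU_flat_gpc fF sS; have := modS _ (flat_setI1 G fF).
rewrite (rk1E G sS) (rk1E G sSF) -SF; lia.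
Qed.

Lemma flatE1 : flat M E1.
Proof.
apply/(gpc_flat G); rewrite setIid (gpc_meet G) (subE1 G) flatT; split => //.
exact: flatW2 G.
Qed.

Lemma has_chord_side1 C : chordal M1 -> circuit M C -> 4 <= #|C| -> C \subset E1 ->
  has_chord M C.
Proof.
move=> chM1 cC C4 sC; rewrite (circuit1E G sC) in cC.
have [C1 [C2 [e [c1 c2 C12 CC12]]]] := chM1 C cC C4.
have sC1 : C1 \subset E1 := circuit_sub_ground c1.
have sC2 : C2 \subset E1 := circuit_sub_ground c2.
by exists C1, C2, e; rewrite !(circuit1E G).
Qed.

End GpcRank.

Section GpcChordal.
Variables (T : finType) (M1 M2 M : matroid T) (W : {set T}).
Hypothesis G : modular_gpc M1 M2 M W.
Let G' := modular_gpc_sym G.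
Local Notation E1 := (ground M1).
Local Notation E2 := (ground M2).
Local Notation E := (ground M).
Implicit Types X Y Z B C F S : {set T}.

Lemma binary_pg_on_side S : binary_pg_on M S -> (S \subset E1) || (S \subset E2).
Proof.
case=> r [g [g_inj g_im g_indep]]; have sS := pg_sub_ground g_im g_indep.
have sideE u : u \in S -> u \notin E1 -> u \in E2.
  by move=> uS; move: (subsetP sS u uS); rewrite (gpc_ground G) inE => /orP[->|].
have [//|/subsetPn[y yS yE1]] := boolP (S \subset E1).
have yE2 := sideE y yS yE1; apply/subsetP => x xS; apply/negPn/negP => xE2.
have xE1 : x \in E1 by apply: contraR xE2; apply: sideE.
have xy : x != y by apply: contraNneq yE1 => <-.
(* The third point z of the line through x and y lies on one side, whose flat
   ground set would then contain the whole line. *)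
have [z [zS gz _ _]] := pg_sum_point g_inj g_im xS yS xy.
have mem_flat_cl2 F u v w : flat M F -> u \in F -> v \in F -> w \in cl M [set u; v] -> w \in F.
  by move=> fF uF vF; apply/subsetP/(cl_sub_flat fF); rewrite subUset !sub1set uF vF.
have [zE1|zE1] := boolP (z \in E1).
  have : y \in cl M [set x; z].
    by apply: (pg_cl_sum g_im g_indep xS zS yS); rewrite gz addrA F2_addvv add0r.
  by move/(mem_flat_cl2 _ _ _ _ (flatE1 G) xE1 zE1); rewrite (negPf yE1).
have : x \in cl M [set y; z].
  by apply: (pg_cl_sum g_im g_indep yS zS xS); rewrite gz addrCA F2_addvv addr0.
by move/(mem_flat_cl2 _ _ _ _ (flatE1 G') yE2 (sideE z zS zE1)); rewrite (negPf xE2).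
Qed.

Section CrossingCircuit.
Variables (C : {set T}) (p q : T).
Hypotheses (cC : circuit M C) (pC : p \in C) (pE2 : p \notin E2) (qC : q \in C) (qE1 : q \notin E1).
Local Notation P := (C :\: E2).
Local Notation Q := (C :&: E2).
Local Notation J1 := (cl M1 P :&: W).
Local Notation J2 := (cl M2 Q :&: W).

Let sC : C \subset E := circuit_sub_ground cC.

Let side u : u \in C -> (u \in E1) || (u \in E2).
Proof. by move=> uC; rewrite -in_setU -(gpc_ground G) (subsetP sC). Qed.

Let qE2 : q \in E2. Proof. by have := side qC; rewrite (negPf qE1). Qed.
Let qQ : q \in Q. Proof. by rewrite inE qC qE2. Qed.

Let sP1 : P \subset E1.
Proof. by apply/subsetP => u /setDP[uC uE2]; have := side uC; rewrite (negPf uE2) orbF. Qed.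

Let PC : P != C. Proof. by apply: contraTneq qC => <-; rewrite inE qE2. Qed.
Let QC : Q != C. Proof. by apply: contraTneq pC => <-; rewrite inE (negPf pE2) andbF. Qed.
Let iP : indep M P := indep_proper_circuit cC (subsetDl C E2) PC.
Let iQ2 : indep M2 Q.
Proof. by rewrite -(indep1E G' (subsetIr C E2)) (indep_proper_circuit cC (subsetIl C E2) QC). Qed.

Lemma crossing_mem_cl : q \in cl M2 ((Q :\ q) :|: J1).
Proof.
set X := C :\ q; have sX : X \subset E := subset_trans (subD1set _ _) sC.
have X2 : X :&: E2 = Q :\ q by apply/setP => y; rewrite !inE andbA.
have sJ1 : J1 \subset W := subsetIr _ _.
have sQJ : (Q :\ q) :|: J1 \subset E2.
  by rewrite subUset (subset_trans (subD1set _ _)) ?subsetIr // (subset_trans sJ1 (subW2 G)).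
set K := cl M2 ((Q :\ q) :|: J1).
have fK : flat M2 K := flat_cl sQJ.
have QK : Q :\ q \subset K := subset_trans (subsetUl _ _) (subset_cl sQJ).
have J1K : J1 \subset K := subset_trans (subsetUr _ _) (subset_cl sQJ).
have CW : C :&: W \subset Q :\ q.
  apply/subsetP => y /setIP[yC yW]; rewrite !inE yC (subsetP (subW2 G)) // !andbT.
  by apply: contraNneq qE1 => <-; apply: (subsetP (subW1 G)).
have X1 : X :&: E1 \subset P :|: (C :&: W).
  apply/subsetP => y /setIP[/setD1P[_ yC] yE1]; rewrite !inE yC /=.
  by case yE2 : (y \in E2); rewrite ?(mem_W G yE1 yE2).
have sPCW : P :|: (C :&: W) \subset E1.
  by rewrite subUset sP1 (subset_trans (subsetIr _ _) (subW1 G)).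
have J1'K : cl M1 (X :&: E1) :&: W \subset K.
  apply: subset_trans (_ : cl M1 (cl M1 P :|: (C :&: W)) :&: W \subset K).
    by rewrite cl_clU // setSI // clS.
  rewrite (modular_clU (gpc_modular1 G) (flat_cl sP1) (subsetIr C W)).
  have sJCW : J1 :|: (C :&: W) \subset W by rewrite subUset sJ1 subsetIr.
  rewrite (clW G sJCW); apply: cl_sub_flat fK _.
  by rewrite subUset J1K (subset_trans CW QK).
have LK : trace_cl M1 M2 W X \subset K.
  have sJJ : (cl M1 (X :&: E1) :&: W) :|: (cl M2 (X :&: E2) :&: W) \subset W.
    by rewrite subUset !subsetIr.
  rewrite /trace_cl (clW G sJJ); apply: cl_sub_flat fK _.
  by rewrite subUset J1'K X2 (subset_trans (subsetIl _ _)) // clS // subsetUl.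
have : q \in cl M X :&: E2 by rewrite inE circuit_mem_cl.
case: (cl_gpc_setI G sX) => _ -> _; apply/subsetP/cl_sub_flat => //.
by rewrite subUset X2 QK LK.
Qed.

Lemma crossing_rk_lt : rk M1 (J1 :|: J2) < rk M1 J1 + rk M1 J2.
Proof.
have sJ1 : J1 \subset W := subsetIr _ _; have sJ2 : J2 \subset W := subsetIr _ _.
have sJ12 : J1 :|: J2 \subset W by rewrite subUset sJ1 sJ2.
have sQ2 : Q \subset E2 := subsetIr C E2.
have rkQJ : rk M2 (Q :|: J1) <= rk M2 ((Q :\ q) :|: J1).
  by move: crossing_mem_cl; rewrite clE setUA setD1K // => /andP[].
have := rkU M2 (Q :\ q) J1; rewrite (rk_indep (indep_hered (subD1set Q q) iQ2)).
have := modular_rkU (gpc_modular2 G) (flat_cl sQ2) sJ1.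
rewrite rk_clU ?subUset ?sQ2 ?(subset_trans sJ1 (subW2 G)) // rk_cl // (rk_indep iQ2).
rewrite [J2 :|: J1]setUC -(rkW G sJ1) -(rkW G sJ2) -(rkW G sJ12).
have cardQ : #|Q| = #|Q :\ q|.+1 by rewrite (cardsD1 q Q) qQ.
rewrite cardQ addSn => eqQJ rkQJ'.
by have := leq_add (leq_trans rkQJ rkQJ') (leqnn (rk M1 J2)); rewrite eqQJ -addnA ltn_add2l.
Qed.

Lemma crossing_has_chord : binary_pg_on M1 W -> has_chord M C.
Proof.
case=> r [f [f_inj f_im f_indep]].
have sQ2 : Q \subset E2 := subsetIr C E2.
have [e eW /andP[eJ1 eJ2]] := pg_cl_meet f_im f_indep (subsetIr _ _) (subsetIr _ _) crossing_rk_lt.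
have fJ1 : flat M1 J1 := flatI (flat_cl sP1) (flatW1 G).
have fJ2 : flat M1 J2 := flatW G' (subsetIr _ _) (flatI (flat_cl sQ2) (flatW2 G)).
rewrite cl_flat // in eJ1; rewrite cl_flat // in eJ2.
have eE1 := subsetP (subW1 G) e eW; have eE2 := subsetP (subW2 G) e eW.
have eclP : e \in cl M P by rewrite (mem_cl1E G sP1 eE1); case/setIP: eJ1.
have eclQ : e \in cl M Q by rewrite (mem_cl1E G' sQ2 eE2); case/setIP: eJ2.
have eP : e \notin P by rewrite inE eE2.
have eC : e \notin C.
  apply: (notin_circuit_cl cC (subsetDl _ _) iP eP eclP); apply: contraTneq qC => <-.
  by rewrite !inE qE2 orbF; apply: contraNneq qE1 => ->.
have ie : indep M [set e] by rewrite (indep1E G) ?sub1set // (pg_indep1 f_im f_indep eW).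
have PQ : P :|: Q = C by rewrite setUC setID.
have dPQ : P :&: Q = set0.
  by apply/setP => y; rewrite !inE; case: (y \in E2); rewrite ?andbF.
exact: has_chord_common_cl cC PQ dPQ PC QC eC eclP eclQ ie.
Qed.

End CrossingCircuit.

Lemma gpc_chordal : chordal M1 -> chordal M2 -> binary_pg_on M1 W -> chordal M.
Proof.
move=> chM1 chM2 pgW C cC C4.
have [sC1|/subsetPn[q qC qE1]] := boolP (C \subset E1).
  exact: (has_chord_side1 G chM1 cC C4 sC1).
have [sC2|/subsetPn[p pC pE2]] := boolP (C \subset E2).
  exact: (has_chord_side1 G' chM2 cC C4 sC2).
exact: crossing_has_chord cC pC pE2 qC qE1 pgW.
Qed.

End GpcChordal.

Lemma binary_pg_on_eq_indep (T : finType) (N N' : matroid T) (S : {set T}) :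
  (forall X : {set T}, X \subset S -> indep N X = indep N' X) ->
  binary_pg_on N S -> binary_pg_on N' S.
Proof.
move=> eqNN' [r [f [f_inj f_im f_indep]]]; exists r, f; split=> // X sX.
by rewrite -eqNN' ?f_indep.
Qed.

Lemma chordal_pg_modular_of_gf2_chordal (T : finType) (M : matroid T) : gf2_chordal M ->
  chordal M /\ forall S : {set T}, binary_pg_on M S -> modular_flat M S.
Proof.
elim=> [{}M [r [f [f_inj f_im f_indep]]] | M1 M2 {}M _ [chM1 modM1] _ [chM2 modM2] [gpc pgW]].
  split; first exact: (binary_pg_chordal f_im f_indep).
  by move=> S; apply: (binary_pg_modular_flat f_inj f_im f_indep).
case: gpc => gE modW eqW gF; set W := ground M1 :&: ground M2 in modW eqW pgW.
have pgW2 : binary_pg_on M2 W := binary_pg_on_eq_indep eqW pgW.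
have G : modular_gpc M1 M2 M W := Build_modular_gpc gE erefl modW (modM2 _ pgW2) eqW gF.
split=> [|S pgS]; first exact: gpc_chordal G chM1 chM2 pgW.
have [sS|sS] := orP (binary_pg_on_side G pgS).
  apply: (modular_flat_lift G sS); apply/modM1/(binary_pg_on_eq_indep _ pgS) => X sX.
  by rewrite (indep1E G) // (subset_trans sX sS).
apply: (modular_flat_lift (modular_gpc_sym G) sS); apply/modM2/(binary_pg_on_eq_indep _ pgS).
by move=> X sX; rewrite (indep1E (modular_gpc_sym G)) // (subset_trans sX sS).
Qed.

Theorem lemma3p9 (T : finType) (M : matroid T) :
  gf2_chordal M -> chordal M.
Proof. by case/chordal_pg_modular_of_gf2_chordal. Qed.
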